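(* Every topological space with the discrete countable chain condition (DCCC) is selectively $3$-star-ccc.
   Context: No separation axioms are assumed. A space has the DCCC if every discrete family of open sets is countable. For $B\subseteq X$ and a family $\mathcal{U}$ of subsets of $X$: $\operatorname{st}^1(B,\mathcal{U})=\bigcup\{U\in\mathcal{U}:U\cap B\neq\emptyset\}$ and $\operatorname{st}^{n+1}(B,\mathcal{U})=\bigcup\{U\in\mathcal{U}:U\cap\operatorname{st}^n(B,\mathcal{U})\neq\emptyset\}$. A space $X$ is selectively $3$-star-ccc if for every open cover $\mathcal{U}$ of $X$ and every sequence $(\mathcal{A}_n:n\in\omega)$ of maximal pairwise disjoint families of open subsets of $X$, there is a sequence $(A_n\in\mathcal{A}_n:n\in\omega)$ with $\operatorname{st}^3(\bigcup_{n\in\omega}A_n,\mathcal{U})=X$. *)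

From mathcomp Require Import all_boot.
From mathcomp Require Import boolp classical_sets cardinality topology.
Set Implicit Arguments. Unset Strict Implicit. Unset Printing Implicit Defensive.
Local Open Scope classical_set_scope.

Definition discrete_family (T : topologicalType) (F : set (set T)) : Prop :=
  forall x : T, exists V : set T, [/\ open V, V x &
    forall A B, F A -> F B -> A `&` V !=set0 -> B `&` V !=set0 -> A = B].

Definition DCCC (T : topologicalType) : Prop :=
  forall F : set (set T), (forall A, F A -> open A) -> discrete_family F ->
    countable F.

Definition open_cover (T : topologicalType) (U : set (set T)) : Prop :=
  (forall A, U A -> open A) /\ \bigcup_(A in U) A = setT.

Definition pairwise_disjoint_open (T : topologicalType) (F : set (set T)) : Prop :=
  (forall A, F A -> open A) /\
  (forall A B, F A -> F B -> A <> B -> A `&` B = set0).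

Definition maximal_disjoint_open (T : topologicalType) (F : set (set T)) : Prop :=
  pairwise_disjoint_open F /\
  (forall G, pairwise_disjoint_open G -> F `<=` G -> G = F).

Definition st1 (T : Type) (B : set T) (U : set (set T)) : set T :=
  \bigcup_(A in [set A | U A /\ A `&` B !=set0]) A.

Fixpoint stn (T : Type) (n : nat) (B : set T) (U : set (set T)) : set T :=
  match n with
  | 0 => st1 B U          (* stn 0 = st^1 *)
  | k.+1 => st1 (stn k B U) U
  end.

Definition st (T : Type) (n : nat) (B : set T) (U : set (set T)) : set T :=
  stn n.-1 B U.

Definition selectively_3_star_ccc (T : topologicalType) : Prop :=
  forall (U : set (set T)) (A : nat -> set (set T)),
    open_cover U -> (forall n, maximal_disjoint_open (A n)) ->
    exists S : nat -> set T, (forall n, A n (S n)) /\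
      st 3 (\bigcup_(n in setT) S n) U = setT.

(* Pick for every point x a member u x of the cover containing it, and take a
   maximal set D of points whose sets u x are pairwise "star-separated": no
   member of the cover meets two of them.  Each point p then has the open
   neighbourhood u p meeting at most one u x with x in D, so {u x | x in D} is
   a discrete family of open sets and is countable by the DCCC.  Countably
   many nonempty open sets can each be hit by a member selected from a
   distinct maximal disjoint family.  By maximality of D, every u z meets a
   member W of the cover which also meets some u y with y in D, so
   z in u z ⊆ st^3 of the union of the selected sets. *)

From mathcomp Require Import all_boot.
From mathcomp Require Import boolp classical_sets cardinality topology.
Set Implicit Arguments. Unset Strict Implicit. Unset Printing Implicit Defensive.
Local Open Scope classical_set_scope.

Lemma sub_st1 (T : Type) (U : set (set T)) (A B : set T) :
  U A -> A `&` B !=set0 -> A `<=` st1 B U.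
Proof. by move=> UA AB x Ax; exists A. Qed.

Lemma sub_st3 (T : Type) (U : set (set T)) (B A1 A2 A3 : set T) :
  U A1 -> U A2 -> U A3 ->
  A1 `&` B !=set0 -> A2 `&` A1 !=set0 -> A3 `&` A2 !=set0 ->
  A3 `<=` st 3 B U.
Proof.
move=> UA1 UA2 UA3 A1B A2A1 A3A2; apply: sub_st1 => //.
apply: subset_nonempty A3A2; apply: setIS; apply: sub_st1 => //.
by apply: subset_nonempty A2A1; apply: setIS; apply: sub_st1.
Qed.

Section MaximalDisjointOpen.
Variables (T : topologicalType) (F : set (set T)).
Hypothesis Fmax : maximal_disjoint_open F.

Lemma maximal_disjoint_open_mem (O : set T) :
  open O -> (forall A, F A -> A `&` O = set0) -> F O.
Proof.
move: Fmax => [[Fo Fd] Fm] oO FO0.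
have FOdisj : pairwise_disjoint_open (F `|` [set O]).
  split; first by move=> A [/Fo|->].
  move=> A B [FA|->] [FB|->] AB.
  - exact: Fd.
  - exact: FO0.
  - by rewrite setIC; exact: FO0.
  - by [].
by rewrite -(Fm _ FOdisj (@subsetUl _ F [set O])); right.
Qed.

Lemma maximal_disjoint_open_set0 : F set0.
Proof. by apply: maximal_disjoint_open_mem; [exact: open0 | move=> A _; rewrite setI0]. Qed.

Lemma maximal_disjoint_open_meets (O : set T) :
  open O -> O !=set0 -> exists2 A, F A & A `&` O !=set0.
Proof.
move=> oO [p Op]; apply: contrapT => noA.
have FO : F O.
  apply: maximal_disjoint_open_mem => // A FA.
  by apply/nonemptyPn => AO; apply: noA; exists A.
by apply: noA; exists O => //; exists p.
Qed.

End MaximalDisjointOpen.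

Lemma countable_selection (T : topologicalType) (O : set (set T))
    (A : nat -> set (set T)) :
  countable O -> (forall B, O B -> open B /\ B !=set0) ->
  (forall n, maximal_disjoint_open (A n)) ->
  exists S : nat -> set T, (forall n, A n (S n)) /\
    forall B, O B -> B `&` \bigcup_(n in setT) S n !=set0.
Proof.
move=> /countable_injP[f finj] Oopen Amax.
(* Indices outside the range of [f] get [set0], which every maximal family contains. *)
have Sn n : exists S, A n S /\ forall B, O B -> f B = n -> S `&` B !=set0.
  have [[B [OB fB]]|noB] := pselect (exists B, O B /\ f B = n).
    have [oB B0] := Oopen B OB.
    have [S AS SB] := maximal_disjoint_open_meets (Amax n) oB B0.
    exists S; split => // B' OB' fB'.
    by rewrite (finj B' B) ?inE // fB fB'.
  exists set0; split; first exact: maximal_disjoint_open_set0.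
  by move=> B OB fB; exfalso; apply: noB; exists B.
have [S SP] := choice Sn.
exists S; split => [n|B OB]; first exact: (proj1 (SP n)).
have [x [Sx Bx]] := (proj2 (SP (f B))) B OB erefl.
by exists x; split => //; exists (f B).
Qed.

Section StarSeparated.
Variables (T : topologicalType) (U : set (set T)) (u : T -> set T).

Definition star_separated (D : set T) : Prop :=
  forall x y W, D x -> D y -> U W ->
    W `&` u x !=set0 -> W `&` u y !=set0 -> x = y.

Lemma maximal_star_separated_exists :
  exists D, star_separated D /\ forall D', D `<` D' -> ~ star_separated D'.
Proof.
apply: Zorn_bigcup => F Fsep Ftot x y W [X FX Xx] [Y FY Yy].
have [XY|YX] := Ftot _ _ FX FY.
- exact: Fsep _ FY x y W (XY _ Xx) Yy.
- exact: Fsep _ FX x y W Xx (YX _ Yy).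
Qed.

Hypotheses (uU : forall x, U (u x)) (u_refl : forall x, u x x).

Lemma maximal_star_separated_linked (D : set T) :
  star_separated D -> (forall D', D `<` D' -> ~ star_separated D') ->
  forall z, exists y W, [/\ D y, U W, W `&` u z !=set0 & W `&` u y !=set0].
Proof.
move=> Dsep Dmax z; have [Dz|Dz] := pselect (D z).
  by exists z, (u z); split => //; exists z.
apply: contrapT => nolink; apply: (Dmax (D `|` [set z])).
  split; first exact: subsetUl.
  by move=> /(_ z (or_intror erefl)).
move=> x y W [Dx|->] [Dy|->] UW Wx Wy.
- exact: (Dsep x y W).
- by exfalso; apply: nolink; exists x, W.
- by exfalso; apply: nolink; exists y, W.
- by [].
Qed.

Lemma star_separated_discrete (D : set T) :
  (forall W, U W -> open W) -> star_separated D -> discrete_family (u @` D).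
Proof.
move=> Uo Dsep p; exists (u p); split => //; first exact: Uo.
move=> _ _ [x Dx <-] [y Dy <-] xp yp.
by rewrite (Dsep x y (u p)) // setIC.
Qed.

End StarSeparated.

Theorem corollary5 (T : topologicalType) : DCCC T -> selectively_3_star_ccc T.
Proof.
move=> dccc U A [Uo Ucov] Amax.
have cover x : exists W, U W /\ W x.
  have : (\bigcup_(W in U) W) x by rewrite Ucov.
  by case=> W UW Wx; exists W.
have [u uP] := choice cover.
have uU x := proj1 (uP x); have u_refl x := proj2 (uP x).
have [D [Dsep Dmax]] := maximal_star_separated_exists U u.
have uD_open : forall B, (u @` D) B -> open B by move=> _ [x _ <-]; exact: Uo.
have cD := dccc _ uD_open (star_separated_discrete uU u_refl Uo Dsep).
have [|S [AS Smeets]] := countable_selection cD _ Amax.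
  by move=> _ [x _ <-]; split; [exact: Uo | exists x].
exists S; split => //; apply/seteqP; split => // z _.
have [y [W [Dy UW Wz Wy]]] := maximal_star_separated_linked uU u_refl Dsep Dmax z.
have yS : u y `&` \bigcup_(n in setT) S n !=set0 by apply: Smeets; exists y.
have zW : u z `&` W !=set0 by rewrite setIC.
exact: sub_st3 (uU y) UW (uU z) yS Wy zW z (u_refl z).
Qed.
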